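(* Let $G=(V,E)$ be an $n$-vertex finite simple undirected graph with distinct vertex IDs, whose neighborhood independence is bounded by a constant $c$, and let $K$ be a positive integer with $\delta(G)\ge K$. Using the procedure Efficient-VM with parameter $K$, each active vertex increases its virtual memory by a factor $K$: in the round in which its color class is active, it has exclusive use of the memories of the $K$ neighbors it selected. The computation requires $O(\log^* n + K^4)$ rounds.
   Context: $\Gamma(v)$ is the neighbor set of $v$, $\deg(v)=|\Gamma(v)|$, $\delta(G)=\min_v\deg(v)$. The neighborhood independence of $G$ is the maximum over $v$ of the size of an independent set contained in $\Gamma(v)$. Model: synchronous CONGEST model ($O(\log n)$-bit messages per edge per round). Operation $K$-Next-Modulo$(v,\Gamma(v),K)$: list $\Gamma(v)\cup\{v\}$ in ascending ID order as $u_1,\dots,u_d$ ($d=\deg(v)+1$) with $v=u_i$; $v$ selects $u_{i+1},\dots,u_{i+K}$, indices cyclic modulo $d$. Procedure Efficient-VM$(G,K)$: (1) every vertex selects its $K$ neighbors by $K$-Next-Modulo (one round); let $G'=(V,E')$ with $E'$ the set of edges $\{v,u\}$ such that $v$ selected $u$, and $\Delta'$ its maximum degree; (2) compute a 2-hop coloring of $G'$ (vertices at distance at most $2$ in $G'$ get distinct colors) with Linial's algorithm on $G'^2$ ($O(\Delta'^4)$ colors, $\log^* n+O(1)$ rounds); (3) process the color classes one per round in round-robin order; in the round of a class, exactly its vertices are active and each distributes its backup data to the $K$ vertices it selected. *)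

From mathcomp Require Import all_boot.
Set Implicit Arguments. Unset Strict Implicit. Unset Printing Implicit Defensive.

Section Defs.
Variable T : finType.
Variable e : rel T.
Variable id : T -> nat.

Definition simple_graph := symmetric e /\ irreflexive e.

Definition nbhd (v : T) : {set T} := [set u | e v u].
Definition deg (v : T) : nat := #|nbhd v|.

Definition independent (S : {set T}) : Prop :=
  forall x y, x \in S -> y \in S -> ~~ e x y.

Definition nbhd_indep_le (c : nat) : Prop :=
  forall v (S : {set T}), S \subset nbhd v -> independent S -> #|S| <= c.

Definition id_sorted_closed_nbhd (v : T) : seq T :=
  sort [rel x y | id x <= id y] (enum (v |: nbhd v)).

(* K-Next-Modulo(v, Gamma(v), K): with v = u_i, select u_{i+1}, ..., u_{i+K},
   indices taken cyclically modulo d (0-based here). *)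
Definition next_modulo (K : nat) (v : T) : {set T} :=
  let s := id_sorted_closed_nbhd v in
  let d := size s in
  let i := index v s in
  [set u | [exists j : 'I_K, u == nth v s ((i + j.+1) %% d)]].

(* G' = (V, E'), {v,u} in E' iff v selected u (or u selected v) *)
Definition sel_edge (K : nat) : rel T :=
  [rel v u | (u \in next_modulo K v) || (v \in next_modulo K u)].

Definition sel_maxdeg (K : nat) : nat :=
  \max_(v : T) #|[set u | sel_edge K v u]|.

Definition two_hop_coloring (K : nat) (col : T -> nat) : Prop :=
  forall v w, v != w ->
    (sel_edge K v w || [exists x, sel_edge K v x && sel_edge K x w]) ->
    col v != col w.

(* number of color classes (= rounds of step (3), one class per round) *)
Definition num_colors (col : T -> nat) : nat := size (undup [seq col v | v <- enum T]).

End Defs.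

Fixpoint log_star_rec (fuel n : nat) : nat :=
  match fuel with
  | 0 => 0
  | f.+1 => if n <= 1 then 0 else (log_star_rec f (trunc_log 2 n)).+1
  end.
Definition log_star (n : nat) : nat := log_star_rec n n.

(* The K selections of a vertex v are its next K neighbours in the cyclic ID
   order of Gamma(v) u {v}; they are distinct neighbours since deg v >= K.
   Two vertices of one colour class are at distance > 2 in G', so their
   selections are disjoint and neither selects the other.  The heart is the
   bound Delta' <= (c + 1) K: v selects K vertices, and the vertices selecting
   v lie in Gamma(v), so their independence number is at most c; ordered
   cyclically from v, each of them has fewer than K later neighbours among
   them (all of these lie strictly between it and v in its own cyclic order,
   and v is among its next K), and a greedy argument
   bounds them by c K.  Linial's algorithm then uses A ((c + 1) K)^4 colours. *)

From mathcomp Require Import all_boot zify.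
Set Implicit Arguments. Unset Strict Implicit. Unset Printing Implicit Defensive.

Section ForwardDegree.
Variables (T : finType) (e : rel T).
Hypotheses (e_sym : symmetric e) (e_irr : irreflexive e).

Lemma independentU1 x (Y : {set T}) : independent e Y ->
  (forall y, y \in Y -> ~~ e x y) -> independent e (x |: Y).
Proof.
move=> indY xY a b; rewrite !inE => /predU1P[-> | aY] /predU1P[-> | bY].
- by rewrite e_irr.
- exact: xY.
- by rewrite e_sym xY.
- exact: indY.
Qed.

Lemma card_le_indep_fwd_deg (key : T -> nat) c K (X : {set T}) :
  {in X &, injective key} ->
  (forall Y : {set T}, Y \subset X -> independent e Y -> #|Y| <= c) ->
  (forall x, x \in X -> #|[set y in X | e x y & key x < key y]| < K) ->
  #|X| <= c * K.
Proof.
elim: c X => [|c IH] X key_inj indepX fwdX;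
  case: (set_0Vmem X) => [-> | [x0 x0X]]; rewrite ?cards0 //.
  suff : #|[set x0]| <= 0 by rewrite cards1.
  apply: indepX; first by rewrite sub1set.
  by move=> a b; rewrite !inE => /eqP-> /eqP->; rewrite e_irr.
(* Removing the key-minimal x with its neighbours costs at most K vertices and
   lowers the independence number. *)
pose x := [arg min_(y < x0 in X) key y].
have [xX x_min] : x \in X /\ forall y, y \in X -> key x <= key y.
  by rewrite /x; case: arg_minnP.
pose N := x |: [set y in X | e x y].
have cardN : #|N| <= K.
  rewrite cardsU1 inE e_irr andbF add1n.
  apply: leq_trans (fwdX x xX); apply: subset_leq_card; apply/subsetP => y.
  rewrite !inE => /andP[yX xy]; rewrite yX xy ltn_neqAle x_min // andbT /=.
  by apply: contraTneq xy => /key_inj -> //; rewrite e_irr.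
have cardXN : #|X :\: N| <= c * K.
  apply: IH => [y z /setDP[yX _] /setDP[zX _]|Y YXN indY|y /setDP[yX _]].
  - exact: key_inj.
  - have xY : x \notin Y by apply/negP => /(subsetP YXN); rewrite !inE eqxx.
    have /indepX : x |: Y \subset X.
      by rewrite subUset sub1set xX (subset_trans YXN) ?subsetDl.
    rewrite cardsU1 xY add1n ltnS; apply.
    apply: independentU1 => // y /(subsetP YXN); rewrite !inE.
    by case: (y \in X); case: (e x y); rewrite ?orbT ?andbF.
  - apply: leq_ltn_trans (fwdX y yX); apply: subset_leq_card; apply/subsetP => z.
    by rewrite !inE => /andP[/andP[_ zX] ->]; rewrite zX.
rewrite -(cardsID N X) mulSn leq_add //.
exact: leq_trans (subset_leq_card (subsetIr X N)) cardN.
Qed.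

End ForwardDegree.

Definition cyc_between (a b x : nat) : bool :=
  if a < b then (a < x) && (x < b) else (a < x) || (x < b).

Lemma cyc_between_rot a b x : a != b -> b != x -> x != a ->
  cyc_between a b x = cyc_between x a b.
Proof.
rewrite /cyc_between => /eqP ab /eqP bx /eqP xa.
by case: (ltngtP a b); case: (ltngtP a x); case: (ltngtP x b); lia.
Qed.

Section CyclicIdOrder.
Variables (T : finType) (e : rel T) (id : T -> nat).
Hypotheses (e_irr : irreflexive e) (id_inj : injective id).

Local Notation s v := (id_sorted_closed_nbhd e id v).

Lemma mem_id_sorted_closed_nbhd v x : (x \in s v) = (x \in v |: nbhd e v).
Proof. by rewrite mem_sort mem_enum. Qed.

Lemma uniq_id_sorted_closed_nbhd v : uniq (s v).
Proof. by rewrite sort_uniq enum_uniq. Qed.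

Lemma size_id_sorted_closed_nbhd v : size (s v) = (deg e v).+1.
Proof. by rewrite size_sort -cardE cardsU1 inE e_irr. Qed.

Lemma ltn_id_index v x y : x \in s v -> y \in s v ->
  (id x < id y) = (index x (s v) < index y (s v)).
Proof.
move=> xs ys.
have : sorted ltn (map id (s v)).
  rewrite ltn_sorted_uniq_leq map_inj_uniq ?uniq_id_sorted_closed_nbhd //.
  by rewrite sorted_map; apply: sort_sorted => a b; apply: leq_total.
rewrite sorted_map => /(sorted_ltn_index (fun a b c => @ltn_trans (id a) (id b) (id c))).
move=> lt_index; case: (ltngtP (index x (s v)) (index y (s v))) => [xy | yx | xy].
- exact: lt_index.
- by apply/negbTE; rewrite -leqNgt ltnW ?lt_index.
- by move/(congr1 (nth x (s v))): xy; rewrite !nth_index // => ->; rewrite ltnn.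
Qed.

(* With [s v] = u_1, ..., u_d and v = u_i, [cyc_nth v k] is u_(i+k) (indices
   mod d), and [cyc_index v] is its inverse on [s v]. *)
Definition cyc_nth v k := nth v (s v) ((index v (s v) + k) %% size (s v)).

Definition cyc_index v w :=
  (index w (s v) + size (s v) - index v (s v)) %% size (s v).

Lemma mem_self_id_sorted_closed_nbhd v : v \in s v.
Proof. by rewrite mem_id_sorted_closed_nbhd setU11. Qed.

Lemma cyc_index_self v : cyc_index v v = 0.
Proof. by rewrite /cyc_index addKn modnn. Qed.

Lemma cyc_index_nth v k : k <= deg e v -> cyc_index v (cyc_nth v k) = k.
Proof.
rewrite -ltnS -size_id_sorted_closed_nbhd => k_lt.
have v_lt := index_mem v (s v); rewrite mem_self_id_sorted_closed_nbhd in v_lt.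
rewrite /cyc_index /cyc_nth index_uniq ?ltn_mod ?uniq_id_sorted_closed_nbhd //; last lia.
rewrite -addnBA ?(ltnW v_lt) // modnDml addnAC subnKC ?(ltnW v_lt) //.
by rewrite modnDl modn_small.
Qed.

Lemma cyc_nth_index v w : w \in s v -> cyc_nth v (cyc_index v w) = w.
Proof.
move=> ws; have v_lt := index_mem v (s v).
rewrite mem_self_id_sorted_closed_nbhd in v_lt.
rewrite /cyc_nth /cyc_index modnDmr addnBA; last by rewrite ltnW ?ltn_addl.
by rewrite addKn modnDr modn_small ?nth_index ?index_mem.
Qed.

Lemma cyc_nth_mem v k : cyc_nth v k \in s v.
Proof. by rewrite mem_nth // ltn_mod size_id_sorted_closed_nbhd. Qed.

Lemma cyc_indexE v w : w \in s v -> cyc_index v w =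
  if index v (s v) <= index w (s v) then index w (s v) - index v (s v)
  else index w (s v) + size (s v) - index v (s v).
Proof.
rewrite -index_mem /cyc_index => w_lt; case: leqP => [vw | wv].
  by rewrite addnC -addnBA // modnDl modn_small // ltn_subLR ?ltn_addl // leq_addl.
rewrite modn_small //; move: (index w _) (index v _) (size _) w_lt wv; lia.
Qed.

Lemma cyc_between_index v u w : u \in s v -> w \in s v -> u != v ->
  cyc_between (id v) (id u) (id w) = (0 < cyc_index v w < cyc_index v u).
Proof.
move=> us ws uv; have vs := mem_self_id_sorted_closed_nbhd v.
have uv_index : index u (s v) != index v (s v).
  by apply: contra uv => /eqP/(congr1 (nth v (s v))); rewrite !nth_index // => ->.
rewrite /cyc_between !(ltn_id_index vs) // (ltn_id_index ws us) !cyc_indexE //.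
move: uv_index (index_mem u (s v)) (index_mem w (s v)) (index_mem v (s v)).
rewrite us ws vs; move: (index u _) (index w _) (index v _) (size _) => pu pw i d.
move=> /eqP ? ? ? ?; by do 3 case: ifP => ?; lia.
Qed.

Lemma cyc_index_eq0 v w : w \in s v -> (cyc_index v w == 0) = (w == v).
Proof.
move=> ws; apply/eqP/eqP => [w0 | ->]; last exact: cyc_index_self.
rewrite -(cyc_nth_index ws) w0 -(cyc_index_self v).
by rewrite cyc_nth_index ?mem_self_id_sorted_closed_nbhd.
Qed.

Lemma next_moduloE K v : next_modulo e id K v = [set cyc_nth v j.+1 | j : 'I_K].
Proof.
apply/setP => u; rewrite inE.
by apply/existsP/imsetP => [[j /eqP->] | [j _ ->]]; exists j.
Qed.

Lemma next_modulo_sub_nbhd K v : K <= deg e v -> next_modulo e id K v \subset nbhd e v.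
Proof.
move=> K_le; rewrite next_moduloE; apply/subsetP => _ /imsetP[j _ ->].
have := cyc_nth_mem v j.+1; rewrite mem_id_sorted_closed_nbhd => /setU1P[vj|//].
have := cyc_index_nth (leq_trans (ltn_ord j) K_le).
by rewrite vj cyc_index_self.
Qed.

Lemma card_next_modulo K v : K <= deg e v -> #|next_modulo e id K v| = K.
Proof.
move=> K_le; rewrite next_moduloE card_imset ?card_ord //.
move=> j1 j2 /(congr1 (cyc_index v)).
by rewrite !cyc_index_nth ?(leq_trans (ltn_ord _) K_le) // => /succn_inj/val_inj.
Qed.

Lemma card_cyc_between_next_modulo K v u : K <= deg e v -> u \in next_modulo e id K v ->
  #|[set w in nbhd e v | cyc_between (id v) (id u) (id w)]| < K.
Proof.
rewrite next_moduloE => K_le /imsetP[j _ ->{u}].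
have j_le : j.+1 <= deg e v := leq_trans (ltn_ord j) K_le.
apply: leq_ltn_trans (ltn_ord j); rewrite -[X in _ <= X]card_ord.
apply: leq_trans _ (leq_imset_card (fun t : 'I_j => cyc_nth v t.+1) _).
apply/subset_leq_card/subsetP => w; rewrite inE => /andP[w_nbhd].
have ws : w \in s v by rewrite mem_id_sorted_closed_nbhd setU1r.
rewrite cyc_between_index ?cyc_nth_mem //; last first.
  by apply: contra_eqN (cyc_index_nth j_le) => /eqP->; rewrite cyc_index_self.
rewrite cyc_index_nth // => /andP[w_pos w_lt].
have t_lt : (cyc_index v w).-1 < j by rewrite -ltnS prednK.
by apply/imsetP; exists (Ordinal t_lt); rewrite //= prednK ?cyc_nth_index.
Qed.

End CyclicIdOrder.

Section SelectionDegree.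
Variables (T : finType) (e : rel T) (id : T -> nat) (c K : nat).
Hypotheses (e_sym : symmetric e) (e_irr : irreflexive e) (id_inj : injective id).
Hypotheses (indep_le : nbhd_indep_le e c) (K_le_deg : forall v, K <= deg e v).

Lemma card_selectors v : #|[set u | v \in next_modulo e id K u]| <= c * K.
Proof.
set S := [set u | _].
have S_nbhd : S \subset nbhd e v.
  apply/subsetP => u; rewrite inE.
  move=> /(subsetP (next_modulo_sub_nbhd id e_irr (K_le_deg u))).
  by rewrite !inE e_sym.
have S_s u : u \in S -> u \in id_sorted_closed_nbhd e id v.
  by move=> /(subsetP S_nbhd) u_nbhd; rewrite mem_id_sorted_closed_nbhd setU1r.
apply: (card_le_indep_fwd_deg e_sym e_irr (key := cyc_index e id v)).
- move=> x y xS yS /(congr1 (cyc_nth e id v)).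
  by rewrite !cyc_nth_index ?S_s.
- by move=> Y YS; apply: indep_le; apply: subset_trans YS S_nbhd.
move=> x xS; have x_sel : v \in next_modulo e id K x by rewrite inE in xS.
apply: leq_ltn_trans (card_cyc_between_next_modulo e_irr id_inj (K_le_deg x) x_sel).
apply/subset_leq_card/subsetP => y; rewrite inE => /and3P[yS xy key_lt].
have [x_nbhd y_nbhd] := (subsetP S_nbhd x xS, subsetP S_nbhd y yS).
have neq_v z : z \in nbhd e v -> z != v.
  by rewrite inE; apply: contraTneq => ->; rewrite e_irr.
have x_ne_y : x != y by apply: contraTneq xy => ->; rewrite e_irr.
rewrite !inE xy -cyc_between_rot ?(inj_eq id_inj)
  ?[v == _]eq_sym ?[y == x]eq_sym ?neq_v //.
rewrite (cyc_between_index (e := e) id_inj) ?S_s ?neq_v // key_lt andbT lt0n.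
by rewrite cyc_index_eq0 ?S_s ?neq_v.
Qed.

Lemma sel_maxdeg_le : sel_maxdeg e id K <= c.+1 * K.
Proof.
apply/bigmax_leqP => v _.
have -> : [set u | sel_edge e id K v u] =
          next_modulo e id K v :|: [set u | v \in next_modulo e id K u].
  by apply/setP => u; rewrite inE in_setU inE.
apply: leq_trans (leq_card_setU _ _).1 _.
by rewrite card_next_modulo // mulSn leq_add2l card_selectors.
Qed.

End SelectionDegree.

Lemma two_hop_coloring_exclusive (T : finType) (e : rel T) (id : T -> nat) K col v w :
  two_hop_coloring e id K col -> v != w -> col v = col w ->
  [disjoint next_modulo e id K v & next_modulo e id K w] /\
  w \notin next_modulo e id K v.
Proof.
move=> col_ok v_ne_w col_vw; have := contraTN (col_ok v w v_ne_w).
rewrite col_vw eqxx negb_or negb_exists => /(_ isT) /andP[no_edge /forallP no_path].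
split; last by apply: contra no_edge => w_sel; rewrite /sel_edge /= w_sel.
rewrite disjoint_subset; apply/subsetP => x x_sel_v; rewrite inE.
by apply: contra (no_path x) => x_sel_w; rewrite /sel_edge /= x_sel_v x_sel_w orbT.
Qed.

Theorem theorem2 :
  forall c A B : nat, exists C : nat,
  forall (T : finType) (e : rel T) (id : T -> nat) (K : nat)
         (col : T -> nat) (L : nat),
    simple_graph e ->
    injective id ->
    nbhd_indep_le e c ->
    0 < K ->
    (forall v : T, K <= deg e v) ->
    (* output of Linial's algorithm on G'^2 *)
    two_hop_coloring e id K col ->
    num_colors col <= A * (sel_maxdeg e id K) ^ 4 ->
    L <= log_star #|T| + B ->
    (* each vertex obtains the memories of K distinct neighbors *)
    (forall v : T, next_modulo e id K v \subset nbhd e v /\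
                   #|next_modulo e id K v| = K) /\
    (* exclusive use within an active color class *)
    (forall v w : T, v != w -> col v = col w ->
       [disjoint next_modulo e id K v & next_modulo e id K w] /\
       w \notin next_modulo e id K v) /\
    (* O(log* n + K^4) rounds *)
    1 + L + num_colors col <= C * (log_star #|T| + K ^ 4).
Proof.
move=> c A B; exists (B.+1 + A * c.+1 ^ 4).
move=> T e id K col L [e_sym e_irr] id_inj indep_le K_gt0 K_le_deg col_ok ncol_le L_le.
split.
  by move=> v; rewrite next_modulo_sub_nbhd ?card_next_modulo.
split; first by move=> v w; apply: two_hop_coloring_exclusive.
have maxdeg4 : sel_maxdeg e id K ^ 4 <= c.+1 ^ 4 * K ^ 4.
  by rewrite -expnMn leq_exp2r // sel_maxdeg_le.
have K4_gt0 : 0 < K ^ 4 by rewrite expn_gt0 K_gt0.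
nia.
Qed.
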